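(* Let $(\Omega,\mathcal F,\mathbb P)$ be a probability space, $1\le p<+\infty$, $q$ with $1/p+1/q=1$, $\mathbb X=\mathbb R^{n}$ with the Euclidean scalar product $\langle\cdot,\cdot\rangle$, $\mathbb U=\mathbb R^{m}$, $\mathbb W=\mathbb R^{k}$, $\mathbb Y=L^p(\Omega,\mathcal F,\mathbb P;\mathbb R^{n})$ and $\mathbb Y^\sharp=L^q(\Omega,\mathcal F,\mathbb P;\mathbb R^{n})$. Let $T\ge1$ be an integer, $(\mathbf W_t)_{t=1,\dots,T}$ random variables with values in $\mathbb W$, and for $t=0,\dots,T-1$ let $f_t:\mathbb X\times\mathbb U\times\mathbb W\to\mathbb X$ and $L_t:\mathbb X\times\mathbb U\times\mathbb W\to[0,+\infty]$, and $\Phi:\mathbb X\to[0,+\infty]$ be given. Assume: (a) for all $(x,u)$, $f_t(x,u,\mathbf W_{t+1})\in\mathbb Y$; (b) the $L_t$ and $\Phi$ are nonnegative measurable functions. Define the Bellman functions $V_T=\Phi$ and, for $t=T-1,\dots,0$, $V_t(x)=\inf\mathbb E\big[\sum_{s=t}^{T-1}L_s(\mathbf X_s,\mathbf U_s,\mathbf W_{s+1})\mathbin{\overset{\cdot}{+}}\Phi(\mathbf X_T)\big]$, the infimum being over processes with $\mathbf X_t=x$, $\mathbf X_{s+1}=f_s(\mathbf X_s,\mathbf U_s,\mathbf W_{s+1})$ and $\sigma(\mathbf U_s)\subset\sigma(\mathbf X_s)$ for $s=t,\dots,T-1$. Assume moreover that the $V_t$ are measurable and satisfy the Bellman equation $V_t(x)=\inf_{u\in\mathbb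 U}\mathbb E\big[L_t(x,u,\mathbf W_{t+1})\mathbin{\overset{\cdot}{+}} V_{t+1}(f_t(x,u,\mathbf W_{t+1}))\big]$ for $t=T-1,\dots,0$ and all $x$. Define the Hamiltonian $H(x,u,\mathbf X^\sharp)=\mathbb E\big[L_t(x,u,\mathbf W_{t+1})\mathbin{\overset{\cdot}{+}}\langle f_t(x,u,\mathbf W_{t+1}),\mathbf X^\sharp\rangle\big]$ for $(x,u,\mathbf X^\sharp)\in\mathbb X\times\mathbb U\times\mathbb Y^\sharp$. Then for all $t=T-1,\dots,0$ and $x\in\mathbb X$, $$V_t(x)=\inf_{\mathbf X\in\mathbb Y}\Big(\inf_{u\in\mathbb U}\ \sup_{\mathbf X^\sharp\in\mathbb Y^\sharp}\big(\mathbb E[\langle-\mathbf X,\mathbf X^\sharp\rangle]\mathbin{\underset{\cdot}{+}} H(x,u,\mathbf X^\sharp)\big)\mathbin{\overset{\cdot}{+}}\mathbb E[V_{t+1}(\mathbf X)]\Big),$$ and, writing $V_t^\star(x^\sharp)=\sup_{x\in\mathbb X}\big(\langle x,x^\sharp\rangle\mathbin{\underset{\cdot}{+}}(-V_t(x))\big)$, for all $t=T-1,\dots,0$ and $x^\sharp\in\mathbb R^{n}$, $$V_t^\star(x^\sharp)\le\inf_{\mathbf X^\sharp\in\mathbb Y^\sharp}\Big(\sup_{u\in\mathbb U}\ \sup_{x\in\mathbb X}\big(\langle x,x^\sharp\rangle\mathbin{\underset{\cdot}{+}}(-H(x,u,\mathbf X^\sharp))\big)\mathbin{\overset{\cdot}{+}}\mathbb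 E\big[V_{t+1}^\star(\mathbf X^\sharp)\big]\Big).$$
   Context: $\overline{\mathbb R}=[-\infty,+\infty]$. The Moreau lower addition $\mathbin{\underset{\cdot}{+}}$ is usual addition extended by $(+\infty)\mathbin{\underset{\cdot}{+}}(-\infty)=(-\infty)\mathbin{\underset{\cdot}{+}}(+\infty)=-\infty$; the Moreau upper addition $\mathbin{\overset{\cdot}{+}}$ is usual addition extended by $(+\infty)\mathbin{\overset{\cdot}{+}}(-\infty)=(-\infty)\mathbin{\overset{\cdot}{+}}(+\infty)=+\infty$. The Hamiltonian $H$ depends on $t$ (through $L_t,f_t$); in each displayed formula for index $t$ it is the one built from $L_t,f_t$. $\mathbb E[V_{t+1}^\star(\mathbf X^\sharp)]$ denotes the expectation of the random variable $\omega\mapsto V_{t+1}^\star(\mathbf X^\sharp(\omega))$. *)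

From HB Require Import structures.
From mathcomp Require Import all_boot all_order all_algebra.
From mathcomp Require Import all_classical all_reals all_analysis measurable_realfun.
Set Implicit Arguments. Unset Strict Implicit. Unset Printing Implicit Defensive.
Import Order.TTheory GRing.Theory Num.Theory.
Import numFieldNormedType.Exports.
Local Open Scope classical_set_scope.
Local Open Scope ring_scope.

Section StochasticControl.
Variables (R : realType) (d : measure_display) (Omega : measurableType d).
Variable (P : probability Omega R).

Definition dotv (n : nat) (a b : 'rV[R]_n) : R := \sum_(i < n) a ord0 i * b ord0 i.
Definition euclid_norm (n : nat) (a : 'rV[R]_n) : R := Num.sqrt (dotv a a).

Definition borel (T : topologicalType) : set (set T) := <<s (@open T) >>.

Definition rv_vec (n : nat) (Y : Omega -> 'rV[R]_n) : Prop :=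
  forall B, borel B -> measurable (Y @^-1` B).

Definition sigma_of (n : nat) (Y : Omega -> 'rV[R]_n) : set (set Omega) :=
  [set Y @^-1` B | B in borel (T := 'rV[R]_n)].

Definition Lp_vec (n : nat) (p : \bar R) (Y : Omega -> 'rV[R]_n) : Prop :=
  rv_vec Y /\ (Lnorm P p (fun w => (euclid_norm (Y w))%:E) < +oo)%E.

Definition borel_efun (T : topologicalType) (g : T -> \bar R) : Prop :=
  forall B : set (\bar R), measurable B -> borel (g @^-1` B).

Definition conj_exp (p : R) (q : \bar R) : Prop :=
  (p = 1 /\ q = +oo%E) \/
  (exists q' : R, q = q'%:E /\ 0 < q' /\ p^-1 + q'^-1 = 1).

Variables (n m k T : nat).
Variable (W : nat -> Omega -> 'rV[R]_k).
Variable (f : nat -> 'rV[R]_n -> 'rV[R]_m -> 'rV[R]_k -> 'rV[R]_n).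
Variable (L : nat -> 'rV[R]_n -> 'rV[R]_m -> 'rV[R]_k -> \bar R).
Variable (Phi : 'rV[R]_n -> \bar R).

Local Open Scope ereal_scope.

Definition admissible (t : nat) (x : 'rV[R]_n)
    (X : nat -> Omega -> 'rV[R]_n) (U : nat -> Omega -> 'rV[R]_m) : Prop :=
  X t = cst x /\
  (forall s, (t <= s <= T)%N -> rv_vec (X s)) /\
  (forall s, (t <= s < T)%N ->
     [/\ rv_vec (U s),
         (forall w, X s.+1 w = f s (X s w) (U s w) (W s.+1 w)) &
         sigma_of (U s) `<=` sigma_of (X s)]).

(* expected cost, with Moreau upper addition *)
Definition cost (t : nat) (X : nat -> Omega -> 'rV[R]_n) (U : nat -> Omega -> 'rV[R]_m)
  : \bar R :=
  \int[P]_w dual_adde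
     (\big[dual_adde/0]_(t <= s < T) L s (X s w) (U s w) (W s.+1 w))
     (Phi (X T w)).

Definition Vfun (t : nat) (x : 'rV[R]_n) : \bar R :=
  if t == T then Phi x
  else ereal_inf [set c | exists X U, admissible t x X U /\ c = cost t X U].

Definition Ham (t : nat) (x : 'rV[R]_n) (u : 'rV[R]_m) (Xs : Omega -> 'rV[R]_n)
  : \bar R :=
  \int[P]_w dual_adde (L t x u (W t.+1 w)) (dotv (f t x u (W t.+1 w)) (Xs w))%:E.

(* Fenchel conjugate of V_t, with Moreau lower addition *)
Definition Vstar (t : nat) (xs : 'rV[R]_n) : \bar R :=
  ereal_sup [set (dotv x xs)%:E + - Vfun t x | x in [set: 'rV[R]_n]].

End StochasticControl.

(* The Bellman equation writes V_t(x) as the infimum over u of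
   E[L ⊕ V_{t+1}(F_u)], where F_u = f_t(x, u, W_{t+1}).  For X in L^p, the
   supremum over X# in L^q of E[<-X, X#>] + H(x, u, X#) equals E[L] when
   X = F_u almost surely (take X# = 0; for X = F_u the two linear terms cancel
   pointwise) and +oo otherwise (take X# = c clamp(F_u,i - X_i) e_i with
   c -> +oo), so the infimum over X gives back the Bellman infimum.  For the
   conjugate, integrating the Fenchel-Young inequality
   <F_u, X#> <= V_{t+1}(F_u) ⊕ V*_{t+1}(X#) against L bounds H(x, u, X#) by
   E[L ⊕ V_{t+1}(F_u)] ⊕ E[V*_{t+1}(X#)]; it remains to take suprema.
   Throughout, the integral is only subadditive for the upper addition,
   ∫ (A ⊕ B) <= ∫ A ⊕ ∫ B when A >= 0, and this is all that is needed. *)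

From HB Require Import structures.
From mathcomp Require Import all_boot all_order all_algebra.
From mathcomp Require Import all_classical all_reals all_analysis measurable_realfun.
From mathcomp Require Import ess_sup_inf lra ring.
Import Order.TTheory GRing.Theory Num.Theory.
Import numFieldNormedType.Exports.
Local Open Scope classical_set_scope.
Local Open Scope ring_scope.
Local Open Scope ereal_scope.
Import DualAddTheory.

Lemma continuous_preimage_borel (T1 T2 : topologicalType) (phi : T1 -> T2) :
  continuous phi -> forall B, borel B -> borel (phi @^-1` B).
Proof.
move=> cphi B; have sa : sigma_algebra setT (image_set_system setT phi (@borel T1)).
  exact: (sigma_algebra_image _ (smallest_sigma_algebra setT (@open T1))).
suff : <<s (@open T2) >> `<=` image_set_system setT phi (@borel T1).
  by move=> /[apply]; rewrite /image_set_system /= setTI.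
apply: smallest_sub => // O oO; rewrite /image_set_system /= setTI.
by apply: sub_sigma_algebra; move/continuousP: cphi; exact.
Qed.

Lemma borelRE (R : realType) : @borel R = measurable.
Proof.
apply/seteqP; split.
  apply: smallest_sub; first exact: sigma_algebra_measurable.
  by move=> O; exact: open_measurable.
move=> B mB; have : (@ocitv R).-sigma.-measurable B := mB.
rewrite RGenOpens.measurableE; apply: smallest_sub; first exact: smallest_sigma_algebra.
by move=> _ [a [b ->]]; apply: sub_sigma_algebra; exact: interval_open.
Qed.

Section borel_preimage.
Context {d : measure_display} {Omega : measurableType d} {T : topologicalType}.
Context {Y : Omega -> T}.
Hypothesis mY : forall O : set T, open O -> measurable (Y @^-1` O).

Lemma borel_preimage_measurable B : borel B -> measurable (Y @^-1` B).
Proof.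
move=> hB; have sa : sigma_algebra setT (image_set_system setT Y measurable).
  exact: (sigma_algebra_image _ (@sigma_algebra_measurable d Omega)).
suff : <<s (@open T) >> `<=` image_set_system setT Y measurable.
  by move=> /(_ B hB); rewrite /image_set_system /= setTI.
by apply: smallest_sub => // O oO; rewrite /image_set_system /= setTI; exact: mY.
Qed.

Lemma measurable_borel_efun_comp {R : realType} {g : T -> \bar R} :
  borel_efun g -> measurable_fun setT (g \o Y).
Proof.
move=> mg _ B mB; rewrite setTI comp_preimage.
by apply: borel_preimage_measurable; exact: mg.
Qed.

End borel_preimage.

Lemma measurable_borel_efun_pair {d : measure_display} {Omega : measurableType d}
    {R : realType} {T1 T2 : topologicalType} {g : T1 * T2 -> \bar R} (a : T1)
    {Z : Omega -> T2} :
  borel_efun g -> (forall O, open O -> measurable (Z @^-1` O)) ->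
  measurable_fun setT (fun w => g (a, Z w)).
Proof.
move=> mg mZ; have cpair : continuous (fun z : T2 => (a, z)).
  by move=> z; exact: (@cvg_pair _ _ _ (nbhs z) _ _ _ _ _ (fun=> a) id (cvg_cst _) cvg_id).
have mpair O : open O -> measurable ((fun w => (a, Z w)) @^-1` O).
  by move=> oO; apply: (mZ ((fun z => (a, z)) @^-1` O)); move/continuousP: cpair; exact.
exact: (@measurable_borel_efun_comp _ _ _ _ mpair _ g mg).
Qed.

Section euclidean.
Context {R : realType} {n : nat}.
Implicit Types (a b : 'rV[R]_n) (i : 'I_n) (r : R).
Local Open Scope ring_scope.

Lemma dotv0 a : dotv a 0 = 0.
Proof. by rewrite /dotv big1 // => j _; rewrite mxE mulr0. Qed.

Lemma dotvNl a b : dotv (- a) b = - dotv a b.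
Proof. by rewrite /dotv -sumrN; apply: eq_bigr => j _; rewrite mxE mulNr. Qed.

Lemma dotv_scale_delta a i r : dotv a (r *: delta_mx ord0 i) = a ord0 i * r.
Proof.
rewrite /dotv (bigD1 i) //= big1 ?addr0 => [|j /negbTE ji].
  by rewrite !mxE !eqxx mulr1.
by rewrite !mxE ji andbF mulr0 mulr0.
Qed.

Lemma euclid_norm0 : euclid_norm (0 : 'rV[R]_n) = 0.
Proof. by rewrite /euclid_norm dotv0 sqrtr0. Qed.

Lemma euclid_norm_scale_delta i r : euclid_norm (r *: delta_mx ord0 i) = `|r|.
Proof. by rewrite /euclid_norm dotv_scale_delta !mxE !eqxx mulr1 -expr2 sqrtr_sqr. Qed.

Lemma coord_le_euclid_norm a i : `|a ord0 i| <= euclid_norm a.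
Proof.
rewrite -sqrtr_sqr /euclid_norm; apply: ler_wsqrtr.
rewrite /dotv (bigD1 i) //= expr2 lerDl; apply: sumr_ge0 => j _.
by rewrite -expr2 sqr_ge0.
Qed.

Lemma dotv_continuous a : continuous (dotv a).
Proof.
apply: continuous_big => [z|i _ z]; first exact: add_continuous.
apply: (@continuousM _ _ (fun=> a ord0 i) (fun b : 'rV[R]_n => b ord0 i)).
  exact: cst_continuous.
exact: coord_continuous.
Qed.

End euclidean.

Definition fenchel_conj {R : realType} {n : nat} (V : 'rV[R]_n -> \bar R)
    (y : 'rV[R]_n) : \bar R :=
  ereal_sup [set (dotv x y)%:E + - V x | x in [set: 'rV[R]_n]].

Section fenchel_conjugate.
Context {R : realType} {n : nat}.
Implicit Types (V : 'rV[R]_n -> \bar R) (x y : 'rV[R]_n).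

Lemma fenchel_young V x y : (dotv x y)%:E <= dual_adde (V x) (fenchel_conj V y).
Proof.
have : (dotv x y)%:E - V x <= fenchel_conj V y by apply: ereal_sup_ubound; exists x.
case: (V x) (fenchel_conj V y) => [v| |] [c| |] //=; rewrite /dual_adde /= ?lee_fin ?leey //.
by move=> h; lra.
Qed.

Lemma open_fenchel_conj_gt V (r : R) : open [set y | r%:E < fenchel_conj V y].
Proof.
have -> : [set y | r%:E < fenchel_conj V y] =
    \bigcup_(x in [set: 'rV[R]_n]) (dotv x @^-1` [set a : R | r%:E < a%:E - V x]).
  apply/seteqP; split => y /=.
    by move=> /ereal_sup_gtP [_ [x _ <-] hx]; exists x.
  by move=> [x _ hx]; apply/ereal_sup_gtP; exists ((dotv x y)%:E - V x) => //; exists x.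
apply: bigcup_open => x _; move/continuousP: (dotv_continuous x); apply.
case: (V x) => [v| |].
- have -> : [set a : R | r%:E < a%:E - v%:E] = [set a | (r + v < a)%R].
    by apply/seteqP; split => a /=; rewrite -EFinD lte_fin ltrBrDr.
  exact: open_gt.
- have -> : [set a : R | r%:E < a%:E - +oo] = set0.
    by apply/seteqP; split => a //=; rewrite addeNy ltNge leNye.
  exact: open0.
- have -> : [set a : R | r%:E < a%:E - -oo] = setT.
    by apply/seteqP; split => a //= _; rewrite addey // ltey.
  exact: openT.
Qed.

End fenchel_conjugate.

Section random_vectors.
Context {R : realType} {d : measure_display} {Omega : measurableType d} {n : nat}.
Implicit Types (X Y : Omega -> 'rV[R]_n).

Lemma rv_vec_open {Y} : rv_vec Y -> forall O, open O -> measurable (Y @^-1` O).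
Proof. by move=> mY O oO; apply: mY; exact: sub_sigma_algebra. Qed.

Lemma rv_vec_cst (v : 'rV[R]_n) : rv_vec (fun _ : Omega => v).
Proof. by move=> B _; rewrite preimage_cst; case: ifP. Qed.

Lemma measurable_continuous_comp_rv (phi : 'rV[R]_n -> R) Y :
  continuous phi -> rv_vec Y -> measurable_fun setT (phi \o Y).
Proof.
move=> cphi mY _ B mB; rewrite setTI comp_preimage.
by apply: mY; apply: continuous_preimage_borel cphi _ _; rewrite borelRE.
Qed.

Lemma measurable_coord_rv {Y} (i : 'I_n) :
  rv_vec Y -> measurable_fun setT (fun w => Y w ord0 i).
Proof.
move=> mY; apply: (measurable_continuous_comp_rv (fun b : 'rV[R]_n => b ord0 i)) => //.
exact: coord_continuous.
Qed.

Lemma measurable_dotv X Y :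
  rv_vec X -> rv_vec Y -> measurable_fun setT (fun w => dotv (X w) (Y w)).
Proof.
move=> mX mY; apply: measurable_sum => i.
by apply: measurable_funM; exact: measurable_coord_rv.
Qed.

Lemma measurable_euclid_norm {Y} :
  rv_vec Y -> measurable_fun setT (fun w => euclid_norm (Y w)).
Proof.
move=> mY; apply: measurableT_comp; last exact: measurable_dotv.
exact: continuous_measurable_fun (@sqrt_continuous R).
Qed.

Lemma rv_vec_scale_delta (i : 'I_n) (s : Omega -> R) :
  measurable_fun setT s -> rv_vec (fun w => s w *: (delta_mx ord0 i : 'rV[R]_n)).
Proof.
move=> ms B hB; have cZ : continuous (fun r : R => r *: (delta_mx ord0 i : 'rV[R]_n)).
  by move=> r; apply: continuousZr_tmp; exact: cvg_id.
have mB : measurable ((fun r : R => r *: (delta_mx ord0 i : 'rV[R]_n)) @^-1` B).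
  by rewrite -borelRE; exact: continuous_preimage_borel.
by have := ms measurableT _ mB; rewrite setTI.
Qed.

Lemma measurable_fenchel_conj_rv (V : 'rV[R]_n -> \bar R) {Y} :
  rv_vec Y -> measurable_fun setT (fun w => fenchel_conj V (Y w)).
Proof.
move=> mY; apply: (measurability _ (ErealGenOInfty.measurableE R)) => //.
move=> _ [_ [r ->] <-]; rewrite setTI.
have -> : (fun w => fenchel_conj V (Y w)) @^-1` `]r%:E, +oo[%classic =
    Y @^-1` [set y | r%:E < fenchel_conj V y].
  by apply/seteqP; split => w /=; rewrite in_itv /= andbT.
by apply: rv_vec_open => //; exact: open_fenchel_conj_gt.
Qed.

End random_vectors.

Section moreau_addition.
Context {R : realType}.
Implicit Types (x y z : \bar R) (c : R).

Lemma ge0_dual_addeE x y : 0 <= x -> 0 <= y -> dual_adde x y = x + y.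
Proof. by case: x => [?| |]; case: y => [?| |]. Qed.

Lemma dual_addeEFin x c : dual_adde x c%:E = x + c%:E.
Proof. by case: x. Qed.

Lemma dual_addey x : dual_adde x +oo = +oo.
Proof. by case: x. Qed.

Lemma dual_addye x : dual_adde +oo x = +oo.
Proof. by []. Qed.

Lemma ge0_dual_adde_parts x y : 0 <= x ->
  maxe (dual_adde x y) 0 + maxe (- y) 0 = x + maxe y 0 + maxe (- dual_adde x y) 0.
Proof.
case: x y => [a| |] [b| |] //=; rewrite /dual_adde ?lee_fin => a0.
- by rewrite /Order.max /= ?lte_fin; repeat case: ifP => ?; rewrite -?EFinD; congr EFin; lra.
all: rewrite /= ?maxye ?maxNye ?addey ?addye //.
all: rewrite /= ?maxye ?maxNye ?addey ?addye //.
all: by rewrite /Order.max /=; case: ifP.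
Qed.

Lemma ge0_dual_adde_neg_le x y : 0 <= x ->
  maxe (- y) 0 <= maxe (- dual_adde x y) 0 + x.
Proof.
case: x y => [a| |] [b| |] //=; rewrite /dual_adde ?lee_fin => a0.
- by rewrite /Order.max /= ?lte_fin; repeat case: ifP => ?; rewrite -?EFinD lee_fin; lra.
all: rewrite /= ?maxye ?maxNye ?addey ?addye ?leey //.
by rewrite add0e lee_fin.
Qed.

Lemma le_dual_adde_sube (a p n p' n' : \bar R) : 0 <= a -> 0 <= p -> 0 <= n -> 0 <= p' -> 0 <= n' ->
  p' + n = a + p + n' -> n <= n' + a -> p' - n' <= dual_adde a (p - n).
Proof.
case: a p n p' n' => [a| |] [p| |] [n| |] [p'| |] [n'| |] //=;
  rewrite ?lee_fin ?leey ?leNye //= -?EFinD -?EFinN -?EFinB ?lee_fin ?eqe //.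
all: try by move=> *; lra.
all: try by move=> *; rewrite leNye.
by move=> ? ? ? ? ? [] *; lra.
Qed.

Lemma sube_dual_adde_sube_le (l p n : \bar R) : 0 <= l -> 0 <= p -> 0 <= n ->
  (n - p) + dual_adde l (p - n) <= l.
Proof.
case: l p n => [l| |] [p| |] [n| |] //=; rewrite /dual_adde ?lee_fin ?leey ?leNye //=;
  rewrite -?EFinD -?EFinN -?EFinB ?lee_fin //.
all: by move=> *; lra.
Qed.

Lemma EFin_sube_le_dual_adde c x y : c%:E - x <= dual_adde (c%:E - dual_adde x y) y.
Proof.
case: x y => [a| |] [b| |] //=; rewrite /dual_adde /= ?lee_fin ?leey ?leNye //.
by move: a b => a b; rewrite -?EFinD ?lee_fin; lra.
Qed.

Lemma le_ereal_inf_dual_adde (U : Type) (S : U -> \bar R) x y : 0 <= y ->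
  (forall u, x <= dual_adde (S u) y) -> x <= dual_adde (ereal_inf [set S u | u in [set: U]]) y.
Proof.
case: y => [r| |] //= r0 h; last by rewrite dual_addey leey.
rewrite dual_addeEFin -leeBlDr //; apply: le_ereal_inf_tmp => _ [u _ <-].
by rewrite leeBlDr // -dual_addeEFin.
Qed.

Lemma EFin_sub_ereal_inf_le {U : Type} {E H : U -> \bar R} c y :
  (forall u, H u <= dual_adde (E u) y) ->
  c%:E - ereal_inf [set E u | u in [set: U]] <=
  dual_adde (ereal_sup [set c%:E - H u | u in [set: U]]) y.
Proof.
move=> HE; rewrite ereal_infEN oppeK addeC -leeBrDr //.
apply: ge_ereal_sup => _ [_ [u _ <-] <-]; rewrite leeBrDr // addeC.
apply: le_trans (EFin_sube_le_dual_adde c (E u) y) _; apply: lee_dD2r.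
apply: le_trans (ereal_sup_ubound _) => /=; last by exists u.
by apply: leeB.
Qed.

End moreau_addition.

Section integral_dual_adde.
Context {d : measure_display} {T : measurableType d} {R : realType}.
Variable mu : {measure set T -> \bar R}.
Implicit Types (A B : T -> \bar R) (g : T -> R).

Lemma measurable_dual_adde {A B} : measurable_fun setT A -> measurable_fun setT B ->
  measurable_fun setT (fun w => dual_adde (A w) (B w)).
Proof.
move=> mA mB; rewrite (_ : (fun w => _) = (fun w => - (- A w - B w))); last first.
  by apply/funext => w; exact: dual_addeE.
by apply: measurableT_comp => //; apply: emeasurable_funD; exact: measurableT_comp.
Qed.

Lemma le_integral_measurable {A B} : measurable_fun setT A -> measurable_fun setT B ->
  (forall w, A w <= B w) -> \int[mu]_w A w <= \int[mu]_w B w.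
Proof.
move=> mA mB AB; rewrite (integralE _ _ A) (integralE _ _ B); apply: leeB.
  apply: ge0_le_integral => //; try exact: measurable_funepos.
  by move=> w _; apply: (@funepos_le _ _ setT) => [? _|]; [exact: AB | exact: in_setT].
apply: ge0_le_integral => //; try exact: measurable_funeneg.
by move=> w _; apply: (@funeneg_le _ _ setT) => [? _|]; [exact: AB | exact: in_setT].
Qed.

Lemma ge0_integral_dual_adde {A B} : measurable_fun setT A -> measurable_fun setT B ->
  (forall w, 0 <= A w) -> (forall w, 0 <= B w) ->
  \int[mu]_w dual_adde (A w) (B w) = dual_adde (\int[mu]_w A w) (\int[mu]_w B w).
Proof.
move=> mA mB A0 B0; rewrite ge0_dual_addeE ?integral_ge0 // -ge0_integralD //.
by apply: eq_integral => w _; exact: ge0_dual_addeE.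
Qed.

(* [\int B] may be [+oo - +oo], so we integrate the pointwise relations
   [h^+ + B^- = A + B^+ + h^-] and [B^- <= h^- + A] for [h := A ⊕ B] instead. *)
Lemma integral_dual_adde_le {A B} : measurable_fun setT A -> measurable_fun setT B ->
  (forall w, 0 <= A w) ->
  \int[mu]_w dual_adde (A w) (B w) <= dual_adde (\int[mu]_w A w) (\int[mu]_w B w).
Proof.
move=> mA mB A0; set h := fun w => dual_adde (A w) (B w).
have mh : measurable_fun setT h by exact: measurable_dual_adde.
have mhp := measurable_funepos mh; have mhn := measurable_funeneg mh.
have mBp := measurable_funepos mB; have mBn := measurable_funeneg mB.
have parts : \int[mu]_w h^\+ w + \int[mu]_w B^\- w =
    \int[mu]_w A w + \int[mu]_w B^\+ w + \int[mu]_w h^\- w.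
  rewrite -!ge0_integralD //; try by move=> ? _; exact: adde_ge0.
    apply: eq_integral => w _; rewrite !funeposE !funenegE.
    exact: ge0_dual_adde_parts.
  exact: emeasurable_funD.
have neg : \int[mu]_w B^\- w <= \int[mu]_w h^\- w + \int[mu]_w A w.
  rewrite -ge0_integralD //; apply: ge0_le_integral => //.
  - exact: emeasurable_funD.
  - by move=> w _; rewrite !funenegE; exact: ge0_dual_adde_neg_le.
rewrite (integralE _ _ h) (integralE _ _ B).
by apply: le_dual_adde_sube => //; exact: integral_ge0.
Qed.

Lemma integral_sub_dual_adde_le {A g} : measurable_fun setT A -> measurable_fun setT g ->
  (forall w, 0 <= A w) ->
  \int[mu]_w (- g w)%:E + \int[mu]_w dual_adde (A w) (g w)%:E <= \int[mu]_w A w.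
Proof.
move=> mA mg A0; have mEg : measurable_fun setT (EFin \o g) by exact: measurableT_comp.
apply: (@le_trans _ _ (\int[mu]_w (- g w)%:E +
    dual_adde (\int[mu]_w A w) (\int[mu]_w (g w)%:E))).
  by apply: leeD2l; exact: integral_dual_adde_le.
rewrite [X in X + _](_ : _ = \int[mu]_w (\- (EFin \o g)) w) //.
rewrite (integralE _ _ (\- _)) funeposN funenegN (integralE _ _ (EFin \o g)).
by apply: sube_dual_adde_sube_le => //; exact: integral_ge0.
Qed.

End integral_dual_adde.

Lemma conj_exp_gt0 {R : realType} {p : R} {q : \bar R} : conj_exp p q -> 0 < q.
Proof. by case=> [[_ ->]|[q' [-> [q'0 _]]]]; rewrite ?ltey ?lte_fin. Qed.

Section probability_Lp.
Context {R : realType} {d : measure_display} {Omega : measurableType d} {n : nat}.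
Variable P : probability Omega R.
Implicit Types (Y : Omega -> 'rV[R]_n).

Lemma Lp_vec_integrable_coordM {p : R} {Y} (i : 'I_n) {s : Omega -> R} :
  (1 <= p)%R -> Lp_vec P p%:E Y -> measurable_fun setT s -> (forall w, `|s w| <= 1)%R ->
  P.-integrable setT (EFin \o (fun w => Y w ord0 i * s w)%R).
Proof.
move=> p1 [mY Yfin] ms s1; have mN := measurable_euclid_norm mY.
have NLp : (fun w => euclid_norm (Y w)) \in Lfun P p%:E.
  by rewrite inE; apply/andP; split; rewrite inE.
have /Lfun1_integrable NL1 : (fun w => euclid_norm (Y w)) \in Lfun P 1.
  apply: (Lfun_subset (lexx _) _ _ _ NLp); rewrite ?lee_fin //.
  by rewrite [X in X \is a fin_num]probability_setT.
apply: le_integrable NL1 => //.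
  by apply/measurable_EFinP; apply: measurable_funM => //; exact: measurable_coord_rv.
move=> w _ /=; rewrite lee_fin normrM (le_trans (ler_piMr _ (s1 w))) //.
rewrite (le_trans (coord_le_euclid_norm (Y w) i)) //; exact: ler_norm.
Qed.

Lemma Lp_vec_bounded {q : \bar R} {Y} (M : R) : 0 < q -> rv_vec Y ->
  (forall w, euclid_norm (Y w) <= M)%R -> Lp_vec P q Y.
Proof.
move=> q0 mY YM; split => //; have M0 : (0 <= M)%R.
  by apply: le_trans (YM point); rewrite /euclid_norm sqrtr_ge0.
have N0 w : (0 <= euclid_norm (Y w))%R by rewrite /euclid_norm sqrtr_ge0.
rewrite unlock /Lnorm; case: q q0 => [r r0| _|//].
- under eq_integral do rewrite gee0_abs ?lee_fin ?N0 // poweR_EFin.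
  apply: poweR_lty; apply: (@le_lt_trans _ _ (\int[P]_w (M `^ r)%:E)).
    apply: ge0_le_integral => //.
    + by move=> w _; rewrite lee_fin powR_ge0.
    + apply/measurable_EFinP.
      exact: measurableT_comp (measurable_powR r) (measurable_euclid_norm mY).
    + move=> w _; rewrite lee_fin.
      by apply: ge0_ler_powR; [exact: ltW | exact: N0 | exact: M0 | exact: YM].
  by rewrite integral_cst // [X in _ * X]probability_setT mule1 ltry.
- case: ifPn => _; last exact: ltry.
  apply: (@le_lt_trans _ _ M%:E); last exact: ltry.
  by apply/ess_supP; apply: aeW => w /=; rewrite lee_fin ger0_norm.
Qed.

End probability_Lp.

Section clamp.
Context {R : realType}.
Local Open Scope ring_scope.

Definition clamp1 (r : R) : R := Num.max (-1) (Num.min r 1).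

Lemma measurable_clamp1 : measurable_fun setT clamp1.
Proof. by apply: measurable_maxr => //; exact: measurable_minr. Qed.

Lemma normr_clamp1_le1 r : `|clamp1 r| <= 1.
Proof.
have N11 : -1 < 1 :> R by lra.
rewrite ler_norml /clamp1 /Order.max /Order.min.
by case: (ltrP r 1) => ?; case: (ltrP (-1) r) => ?; rewrite ?N11; apply/andP; split; lra.
Qed.

Lemma mulr_clamp1_ge0 r : 0 <= r * clamp1 r.
Proof.
have N11 : -1 < 1 :> R by lra.
rewrite /clamp1 /Order.max /Order.min.
by case: (ltrP r 1) => ?; case: (ltrP (-1) r) => ?; rewrite ?N11; nra.
Qed.

Lemma mulr_clamp1_eq0 r : r * clamp1 r = 0 -> r = 0.
Proof.
have N11 : -1 < 1 :> R by lra.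
rewrite /clamp1 /Order.max /Order.min.
by case: (ltrP r 1) => ?; case: (ltrP (-1) r) => ?; rewrite ?N11; nra.
Qed.
End clamp.

Lemma integral_mul_clamp1_gt0 {d : measure_display} {T : measurableType d} {R : realType}
    (mu : {measure set T -> \bar R}) {D : T -> R} :
  measurable_fun setT D -> ~ (\forall w \ae mu, D w = 0%R) ->
  0 < \int[mu]_w (D w * clamp1 (D w))%:E.
Proof.
move=> mD D0; have ge0 w : 0 <= (D w * clamp1 (D w))%:E by rewrite lee_fin mulr_clamp1_ge0.
rewrite lt_def integral_ge0 ?andbT //; apply/negP => /eqP int0; apply: D0.
have : ae_eq mu setT (EFin \o (fun w => D w * clamp1 (D w))%R) (cst 0).
  apply/ae_eq_integral_abs => //.
    apply/measurable_EFinP; apply: measurable_funM => //.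
    exact: measurableT_comp measurable_clamp1 mD.
  by rewrite -int0; apply: eq_integral => w _; rewrite gee0_abs ?ge0.
by apply: filterS => w /(_ I) [] /mulr_clamp1_eq0.
Qed.

Section lagrange_sup.
Context {R : realType} {d : measure_display} {Omega : measurableType d} {n : nat}.
Variables (P : probability Omega R) (q : \bar R).
Variables (L : Omega -> \bar R) (F : Omega -> 'rV[R]_n).
Hypotheses (q_gt0 : 0 < q) (mL : measurable_fun setT L) (L_ge0 : forall w, 0 <= L w)
  (rvF : rv_vec F).

(* The dual of the constraint [X = F]: it equals [E[L]] when [X = F] a.s. and
   [+oo] otherwise. *)
Definition lagrange_sup (X : Omega -> 'rV[R]_n) : \bar R :=
  ereal_sup [set \int[P]_w (dotv (- X w) (Xs w))%:E +
                 \int[P]_w dual_adde (L w) (dotv (F w) (Xs w))%:E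
            | Xs in [set Y | Lp_vec P q Y]].

Lemma integral_le_lagrange_sup X : \int[P]_w L w <= lagrange_sup X.
Proof.
apply: ereal_sup_ubound; exists (fun=> 0%R).
  apply: (Lp_vec_bounded P 0%R q_gt0 (rv_vec_cst _)) => w.
  by rewrite euclid_norm0.
rewrite (eq_integral (cst 0)) => [|w _]; last by rewrite dotv0.
rewrite integral0 add0e; apply: eq_integral => w _.
by rewrite dotv0 dual_addeEFin adde0.
Qed.

Lemma lagrange_sup_le_integral : lagrange_sup F <= \int[P]_w L w.
Proof.
apply: ge_ereal_sup => _ [Xs [mXs _] <-].
rewrite (eq_integral (fun w => (- dotv (F w) (Xs w))%:E)) => [|w _]; last by rewrite dotvNl.
by apply: integral_sub_dual_adde_le => //; exact: measurable_dotv.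
Qed.

Section test_direction.
Variables (p : R) (X : Omega -> 'rV[R]_n) (i : 'I_n).
Hypotheses (p_ge1 : (1 <= p)%R) (F_Lp : Lp_vec P p%:E F) (X_Lp : Lp_vec P p%:E X).

Lemma lagrange_sup_ge_affine (s : Omega -> R) (c : R) :
  measurable_fun setT s -> (forall w, `|s w| <= 1)%R -> \int[P]_w L w \is a fin_num ->
  \int[P]_w L w + c%:E * \int[P]_w ((F w ord0 i - X w ord0 i) * s w)%:E <= lagrange_sup X.
Proof.
move=> ms s1 Lfin.
have iL : P.-integrable setT L.
  apply/integrableP; split => //; under eq_integral do rewrite gee0_abs //.
  by rewrite -ge0_fin_numE // integral_ge0.
have iXs := Lp_vec_integrable_coordM P i p_ge1 X_Lp ms s1.
have iFs := Lp_vec_integrable_coordM P i p_ge1 F_Lp ms s1.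
set Xs := fun w => (c * s w) *: (delta_mx ord0 i : 'rV[R]_n).
have Xs_Lq : Lp_vec P q Xs.
  apply: (Lp_vec_bounded P `|c|%R q_gt0).
    by apply: rv_vec_scale_delta; exact: measurable_funM.
  by move=> w; rewrite euclid_norm_scale_delta normrM ler_piMr.
apply: le_trans (ereal_sup_ubound _) => /=; last by exists Xs.
have -> : \int[P]_w (dotv (- X w) (Xs w))%:E =
    (- c)%:E * \int[P]_w (X w ord0 i * s w)%:E.
  rewrite -integralZl //; apply: eq_integral => w _.
  by rewrite dotv_scale_delta mxE -EFinM; congr EFin; ring.
have -> : \int[P]_w dual_adde (L w) (dotv (F w) (Xs w))%:E =
    \int[P]_w L w + c%:E * \int[P]_w (F w ord0 i * s w)%:E.
  rewrite -integralZl // -integralD //; last exact: integrableZl.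
  apply: eq_integral => w _; rewrite dotv_scale_delta dual_addeEFin -EFinM.
  by congr (_ + EFin _); ring.
rewrite (_ : \int[P]_w ((F w ord0 i - X w ord0 i) * s w)%:E =
    \int[P]_w (F w ord0 i * s w)%:E - \int[P]_w (X w ord0 i * s w)%:E);
  last by rewrite -integralB_EFin //; apply: eq_integral => w _; rewrite mulrBl.
have Xfin : \int[P]_w (X w ord0 i * s w)%:E \is a fin_num by exact: integrable_fin_num.
have Ffin : \int[P]_w (F w ord0 i * s w)%:E \is a fin_num by exact: integrable_fin_num.
rewrite -(fineK Lfin) -(fineK Xfin) -(fineK Ffin).
by rewrite -EFinB -!EFinM -!EFinD lee_fin le_eqVlt; apply/orP; left; apply/eqP; ring.
Qed.

End test_direction.

Lemma lagrange_sup_pinfty {p : R} {X} : (1 <= p)%R -> Lp_vec P p%:E F -> Lp_vec P p%:E X ->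
  ~ (forall i, \forall w \ae P, X w ord0 i = F w ord0 i) -> lagrange_sup X = +oo.
Proof.
move=> p1 F_Lp X_Lp /existsNP [i XFi].
have [Linf|] := eqVneq (\int[P]_w L w) +oo.
  by apply/eqP; rewrite eq_le leey /= -Linf integral_le_lagrange_sup.
rewrite -ltey -ge0_fin_numE ?integral_ge0 // => Lfin.
(* Test against [Xs = c * clamp1 D e_i]: the objective grows like [c * th]. *)
set D := fun w => (F w ord0 i - X w ord0 i)%R.
have mD : measurable_fun setT D.
  by apply: measurable_funB; apply: measurable_coord_rv; [exact: F_Lp.1 | exact: X_Lp.1].
have ms : measurable_fun setT (clamp1 \o D) by exact: measurableT_comp measurable_clamp1 mD.
have s1 w : (`|(clamp1 \o D) w| <= 1)%R by exact: normr_clamp1_le1.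
set th := \int[P]_w (D w * clamp1 (D w))%:E.
have th_gt0 : 0 < th.
  apply: (integral_mul_clamp1_gt0 P mD); apply: contra_not XFi; apply: filterS => w.
  by move=> /eqP; rewrite subr_eq0 => /eqP.
have th_fin : th \is a fin_num.
  have iFs := Lp_vec_integrable_coordM P i p1 F_Lp ms s1.
  have iXs := Lp_vec_integrable_coordM P i p1 X_Lp ms s1.
  apply: integrable_fin_num => //; apply: eq_integrable (integrableB _ iFs iXs) => // w _.
  by rewrite /= mulrBl.
apply/eqP; rewrite eq_le leey /= leNgt; apply/negP => sup_fin.
have S_fin : lagrange_sup X \is a fin_num.
  by rewrite ge0_fin_numE // (le_trans (integral_ge0 _ _) (integral_le_lagrange_sup X)).
have th0 : (0 < fine th)%R by rewrite fine_gt0 // th_gt0 ltey_eq th_fin.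
have := lagrange_sup_ge_affine _ _ i p1 F_Lp X_Lp _
  ((fine (lagrange_sup X) - fine (\int[P]_w L w) + 1) / fine th) ms s1 Lfin.
rewrite -/th -(fineK S_fin) -(fineK Lfin) -(fineK th_fin) -EFinM -EFinD lee_fin.
by rewrite divfK ?gt_eqF //; lra.
Qed.

Lemma integral_dual_adde_le_lagrange_sup (p : R) (V : 'rV[R]_n -> \bar R) X :
  (1 <= p)%R -> Lp_vec P p%:E F -> Lp_vec P p%:E X -> (forall x, 0 <= V x) ->
  measurable_fun setT (V \o F) -> measurable_fun setT (V \o X) ->
  \int[P]_w dual_adde (L w) (V (F w)) <= dual_adde (lagrange_sup X) (\int[P]_w V (X w)).
Proof.
move=> p1 F_Lp X_Lp V0 mVF mVX.
have [XF|XF] := pselect (forall i, \forall w \ae P, X w ord0 i = F w ord0 i); last first.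
  by rewrite (lagrange_sup_pinfty p1 F_Lp X_Lp XF) dual_addye leey.
have -> : \int[P]_w V (X w) = \int[P]_w V (F w).
  apply: ae_eq_integral => //; have := filter_forall (ae_filter_ringOfSetsType P) XF.
  by apply: filterS => w XFw _; congr V; apply/rowP => j; exact: XFw.
rewrite ge0_integral_dual_adde //; apply: lee_dD2r; exact: integral_le_lagrange_sup.
Qed.

Lemma lagrange_sup_dual_adde_le_integral (V : 'rV[R]_n -> \bar R) :
  (forall x, 0 <= V x) -> measurable_fun setT (V \o F) ->
  dual_adde (lagrange_sup F) (\int[P]_w V (F w)) <= \int[P]_w dual_adde (L w) (V (F w)).
Proof.
move=> V0 mVF; rewrite ge0_integral_dual_adde //.
by apply: lee_dD2r; exact: lagrange_sup_le_integral.
Qed.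

Lemma integral_dual_adde_dotv_le (V : 'rV[R]_n -> \bar R) Xs :
  rv_vec Xs -> (forall x, 0 <= V x) -> measurable_fun setT (V \o F) ->
  \int[P]_w dual_adde (L w) (dotv (F w) (Xs w))%:E <=
  dual_adde (\int[P]_w dual_adde (L w) (V (F w))) (\int[P]_w fenchel_conj V (Xs w)).
Proof.
move=> mXs V0 mVF; have mLV := measurable_dual_adde mL mVF.
apply: le_trans (integral_dual_adde_le P mLV (measurable_fenchel_conj_rv V mXs) _); last first.
  by move=> w /=; rewrite ge0_dual_addeE ?L_ge0 ?V0 //; exact: adde_ge0.
apply: le_integral_measurable => [||w].
- apply: measurable_dual_adde => //; apply/measurable_EFinP; exact: measurable_dotv.
- exact: measurable_dual_adde mLV (measurable_fenchel_conj_rv V mXs).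
- have assoc : dual_adde (L w) (dual_adde (V (F w)) (fenchel_conj V (Xs w))) =
      dual_adde (dual_adde (L w) (V (F w))) (fenchel_conj V (Xs w)) := daddeA _ _ _.
  by rewrite /= -assoc; apply: lee_dD2l; exact: fenchel_young.
Qed.

End lagrange_sup.

Section bellman.
Context {R : realType} {d : measure_display} {Omega : measurableType d}.
Variables (P : probability Omega R) (n m k T : nat) (p : R) (q : \bar R).
Variables (W : nat -> Omega -> 'rV[R]_k)
  (f : nat -> 'rV[R]_n -> 'rV[R]_m -> 'rV[R]_k -> 'rV[R]_n)
  (L : nat -> 'rV[R]_n -> 'rV[R]_m -> 'rV[R]_k -> \bar R) (Phi : 'rV[R]_n -> \bar R).
Local Notation V := (Vfun P T W f L Phi).
Hypotheses (p_ge1 : (1 <= p)%R) (q_gt0 : 0 < q).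
Hypothesis W_rv : forall t, (1 <= t <= T)%N -> rv_vec (W t).
Hypothesis f_Lp : forall t, (t < T)%N ->
  forall x u, Lp_vec P p%:E (fun w => f t x u (W t.+1 w)).
Hypothesis L_ge0_borel : forall t, (t < T)%N ->
  (forall x u w, 0 <= L t x u w) /\
  borel_efun (fun z : 'rV[R]_n * 'rV[R]_m * 'rV[R]_k => L t z.1.1 z.1.2 z.2).
Hypothesis Phi_ge0 : forall x, 0 <= Phi x.
Hypothesis V_borel : forall t, (t <= T)%N -> borel_efun (V t).
Hypothesis bellman : forall t, (t < T)%N -> forall x,
  V t x = ereal_inf [set \int[P]_w dual_adde (L t x u (W t.+1 w)) (V t.+1 (f t x u (W t.+1 w)))
                    | u in [set: 'rV[R]_m]].

Lemma Vfun_ge0 t x : 0 <= V t x.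
Proof.
rewrite /Vfun; case: ifP => _; first exact: Phi_ge0.
apply: le_ereal_inf_tmp => _ [X [U [_ ->]]]; apply: integral_ge0 => w _.
have cost_ge0 : 0 <= \big[dual_adde/0]_(t <= s < T) L s (X s w) (U s w) (W s.+1 w).
  rewrite big_nat_cond; apply: (big_ind (fun v : \bar R => 0 <= v)) => //.
    by move=> a b a0 b0; rewrite ge0_dual_addeE // adde_ge0.
  by move=> s /andP[/andP[_ sT] _]; exact: (L_ge0_borel s sT).1.
by rewrite ge0_dual_addeE // adde_ge0.
Qed.

Lemma measurable_L_W t x u : (t < T)%N -> measurable_fun setT (fun w => L t x u (W t.+1 w)).
Proof.
move=> tT; apply: (measurable_borel_efun_pair (x, u) (L_ge0_borel t tT).2).
by apply: rv_vec_open; apply: W_rv; rewrite ltn0Sn.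
Qed.

Lemma measurable_Vfun_rv {t} {Y : Omega -> 'rV[R]_n} :
  (t < T)%N -> rv_vec Y -> measurable_fun setT (V t.+1 \o Y).
Proof.
by move=> tT mY; apply: measurable_borel_efun_comp; [exact: rv_vec_open | exact: V_borel].
Qed.

Lemma Vfun_lagrange_sup t x : (t < T)%N ->
  V t x = ereal_inf [set dual_adde
      (ereal_inf [set lagrange_sup P q (fun w => L t x u (W t.+1 w))
                        (fun w => f t x u (W t.+1 w)) X | u in [set: 'rV[R]_m]])
      (\int[P]_w V t.+1 (X w))
    | X in [set Y | Lp_vec P p%:E Y]].
Proof.
move=> tT; have V0 := Vfun_ge0 t.+1; rewrite bellman //.
apply/eqP; rewrite eq_le; apply/andP; split.
- apply: le_ereal_inf_tmp => _ [X X_Lp <-].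
  apply: le_ereal_inf_dual_adde => [|u]; first exact: integral_ge0.
  apply: le_trans (ereal_inf_lbound _) _; first by exists u.
  have mLu := measurable_L_W t x u tT; have L0 w := (L_ge0_borel t tT).1 x u (W t.+1 w).
  have F_Lp := f_Lp t tT x u.
  exact: (integral_dual_adde_le_lagrange_sup P q _ _ q_gt0 mLu L0 p _ X p_ge1 F_Lp X_Lp V0
    (measurable_Vfun_rv tT F_Lp.1) (measurable_Vfun_rv tT X_Lp.1)).
- apply: le_ereal_inf_tmp => _ [u _ <-].
  have mLu := measurable_L_W t x u tT; have L0 w := (L_ge0_borel t tT).1 x u (W t.+1 w).
  have F_Lp := f_Lp t tT x u.
  apply: le_trans (ereal_inf_lbound _) _; first by exists (fun w => f t x u (W t.+1 w)).
  apply: le_trans (lagrange_sup_dual_adde_le_integral P q _ _ mLu L0 F_Lp.1 _ V0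
    (measurable_Vfun_rv tT F_Lp.1)).
  by apply: lee_dD2r; apply: ereal_inf_lbound; exists u.
Qed.

Lemma fenchel_conj_Vfun_le t xs : (t < T)%N ->
  fenchel_conj (V t) xs <= ereal_inf [set dual_adde
      (ereal_sup [set ereal_sup [set (dotv x xs)%:E - Ham P W f L t x u Xs
                                | x in [set: 'rV[R]_n]]
                 | u in [set: 'rV[R]_m]])
      (\int[P]_w fenchel_conj (V t.+1) (Xs w))
    | Xs in [set Y | Lp_vec P q Y]].
Proof.
move=> tT; apply: le_ereal_inf_tmp => _ [Xs Xs_Lq <-].
apply: ge_ereal_sup => _ [x _ <-]; rewrite bellman //.
apply: (@le_trans _ _ (dual_adde
    (ereal_sup [set (dotv x xs)%:E - Ham P W f L t x u Xs | u in [set: 'rV[R]_m]])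
    (\int[P]_w fenchel_conj (V t.+1) (Xs w)))).
  apply: EFin_sub_ereal_inf_le => u.
  have mLu := measurable_L_W t x u tT; have L0 w := (L_ge0_borel t tT).1 x u (W t.+1 w).
  have F_Lp := f_Lp t tT x u.
  exact: (integral_dual_adde_dotv_le P _ _ mLu L0 F_Lp.1 (V t.+1) Xs Xs_Lq.1 (Vfun_ge0 _)
    (measurable_Vfun_rv tT F_Lp.1)).
apply: lee_dD2r; apply: ge_ereal_sup => _ [u _ <-].
apply: le_trans (ereal_sup_ubound _); last by exists u.
by apply: ereal_sup_ubound; exists x.
Qed.

End bellman.

Theorem proposition5 (R : realType) (d : measure_display) (Omega : measurableType d)
  (P : probability Omega R) (n m k T : nat) (p : R) (q : \bar R)
  (W : nat -> Omega -> 'rV[R]_k)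
  (f : nat -> 'rV[R]_n -> 'rV[R]_m -> 'rV[R]_k -> 'rV[R]_n)
  (L : nat -> 'rV[R]_n -> 'rV[R]_m -> 'rV[R]_k -> \bar R)
  (Phi : 'rV[R]_n -> \bar R) :
  (1 <= p)%R -> conj_exp p q -> (1 <= T)%N ->
  (forall t, (1 <= t <= T)%N -> rv_vec (W t)) ->
  (forall t, (t < T)%N -> forall x u, Lp_vec P p%:E (fun w => f t x u (W t.+1 w))) ->
  (forall t, (t < T)%N ->
     (forall x u w, 0 <= L t x u w) /\
     borel_efun (fun z : 'rV[R]_n * 'rV[R]_m * 'rV[R]_k => L t z.1.1 z.1.2 z.2)) ->
  (forall x, 0 <= Phi x) -> borel_efun Phi ->
  (forall t, (t <= T)%N -> borel_efun (Vfun P T W f L Phi t)) ->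
  (forall t, (t < T)%N -> forall x,
     Vfun P T W f L Phi t x =
     ereal_inf [set \int[P]_w dual_adde (L t x u (W t.+1 w))
                      (Vfun P T W f L Phi t.+1 (f t x u (W t.+1 w)))
               | u in [set: 'rV[R]_m]]) ->
  (forall t, (t < T)%N -> forall x,
     Vfun P T W f L Phi t x =
     ereal_inf [set dual_adde
        (ereal_inf [set ereal_sup [set (\int[P]_w (dotv (- X w) (Xs w))%:E)
                                       + Ham P W f L t x u Xs
                                  | Xs in [set Y | Lp_vec P q Y]]
                   | u in [set: 'rV[R]_m]])
        (\int[P]_w Vfun P T W f L Phi t.+1 (X w))
      | X in [set Y | Lp_vec P p%:E Y]]) /\
  (forall t, (t < T)%N -> forall xs : 'rV[R]_n,
     Vstar P T W f L Phi t xs <=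
     ereal_inf [set dual_adde
        (ereal_sup [set ereal_sup [set (dotv x xs)%:E + - Ham P W f L t x u Xs
                                  | x in [set: 'rV[R]_n]]
                   | u in [set: 'rV[R]_m]])
        (\int[P]_w Vstar P T W f L Phi t.+1 (Xs w))
      | Xs in [set Y | Lp_vec P q Y]]).
Proof.
move=> p_ge1 pq _ W_rv f_Lp L_ge0_borel Phi_ge0 _ V_borel bellman.
have q_gt0 := conj_exp_gt0 pq.
split=> t tT x; first exact: Vfun_lagrange_sup.
exact: (fenchel_conj_Vfun_le P n m k T p).
Qed.
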